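(* Let $G$ be a group with finite generating set $S$, let $\Gamma$ be a tileset graph for $(G,S)$ and let $Y$ be a non-empty skeletal subset. Then $X=Y\cap X_\Gamma$ is non-empty if and only if there is a bi-infinite $\Gamma$-snake $(\omega,\zeta)$ with $d\omega\in Y$. In addition, if $Y$ is an effective (resp. sofic) subshift, then $X$ is an effective (resp. sofic) subshift.
   Context: Elements of $G$ are represented by words over the alphabet $S\cup S^{-1}$; $\overline{w}$ denotes the element represented by $w$. A tileset graph for $(G,S)$ is a finite multigraph $\Gamma=(A,B)$ whose edges are triples $(a,a',s)$ with $a,a'\in A$, $s\in S\cup S^{-1}$ (from $a$ to $a'$, labeled $s$), such that $(a,a',s)\in B$ implies $(a',a,s^{-1})\in B$. A bi-infinite $\Gamma$-snake is a pair $(\omega,\zeta)$ with $\omega:\mathbb{Z}\to G$ injective and $\zeta:\mathbb{Z}\to A$ such that for all $i$, $d\omega_i:=\omega(i)^{-1}\omega(i+1)\in S\cup S^{-1}$ and $(\zeta(i),\zeta(i+1),d\omega_i)\in B$; $d\omega$ denotes the sequence $(d\omega_i)_{i\in\mathbb{Z}}\in (S\cup S^{-1})^{\mathbb{Z}}$. For a finite alphabet $\mathcal{A}$, a subshift is a set $X_{\mathcal F}\subseteq\mathcal{A}^{\mathbb{Z}}$ of all sequences in which no word of a set $\mathcal{F}$ of forbidden finite words appears; it is sofic if $\mathcal F$ can be taken regular and effective if $\mathcal F$ can be taken decidable. The skeleton subshift $X_{G,S}\subseteq (S\cup S^{-1})^{\mathbb{Z}}$ is the set of sequences none of whose non-empty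 finite factors represents $1_G$. A skeletal subset is a shift-invariant subset $Y\subseteq X_{G,S}$ (shift $\sigma(x)_i=x_{i+1}$). $X_\Gamma\subseteq(S\cup S^{-1})^{\mathbb{Z}}$ is the set of label sequences of bi-infinite paths in $\Gamma$. *)

From Stdlib Require Import ZArith List Arith.
Import ListNotations.
Open Scope Z_scope.

Record group_axioms (G : Type) (mul : G -> G -> G) (one : G) (inv : G -> G) : Prop := {
  mul_assoc : forall x y z, mul x (mul y z) = mul (mul x y) z;
  mul_one_l : forall x, mul one x = x;
  mul_one_r : forall x, mul x one = x;
  mul_inv_l : forall x, mul (inv x) x = one;
  mul_inv_r : forall x, mul x (inv x) = one }.

Definition Finite (T : Type) : Prop := exists l : list T, forall x, In x l.

Inductive recf : Type :=
| RZero : recf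
| RSucc : recf
| RProj : nat -> recf
| RComp : recf -> list recf -> recf
| RPrec : recf -> recf -> recf
| RMu : recf -> recf.

Inductive reval : recf -> list nat -> nat -> Prop :=
| ev_zero : forall v, reval RZero v 0
| ev_succ : forall x v, reval RSucc (x :: v) (S x)
| ev_proj : forall i v y, nth_error v i = Some y -> reval (RProj i) v y
| ev_comp : forall f gs v ys y,
    Forall2 (fun g y' => reval g v y') gs ys -> reval f ys y -> reval (RComp f gs) v y
| ev_prec0 : forall f g v y, reval f v y -> reval (RPrec f g) (0%nat :: v) y
| ev_precS : forall f g n v z y,
    reval (RPrec f g) (n :: v) z -> reval g (n :: z :: v) y ->
    reval (RPrec f g) (S n :: v) y
| ev_mu : forall f v n,
    reval f (n :: v) 0%nat ->
    (forall m, (m < n)%nat -> exists k, reval f (m :: v) (S k)) ->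
    reval (RMu f) v n.

Definition decidable_nat (P : nat -> Prop) : Prop :=
  exists f : recf,
    (forall n, exists b, reval f [n] b /\ (b <= 1)%nat) /\
    (forall n, P n <-> reval f [n] 1%nat).

Definition cpair (x y : nat) : nat := ((x + y) * (x + y + 1)) / 2 + y.
Fixpoint code_list (l : list nat) : nat :=
  match l with [] => 0%nat | x :: t => S (cpair x (code_list t)) end.

Section Subshifts.
Context {A : Type}.

Definition factor (x : Z -> A) (i : Z) (n : nat) : list A :=
  map (fun k => x (i + Z.of_nat k)) (seq 0 n).

Definition appears (w : list A) (x : Z -> A) : Prop :=
  exists i, factor x i (length w) = w.

Definition XF (F : list A -> Prop) (x : Z -> A) : Prop :=
  forall w, F w -> ~ appears w x.

Definition is_subshift (Y : (Z -> A) -> Prop) : Prop :=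
  exists F : list A -> Prop, forall x, Y x <-> XF F x.

Definition regular (F : list A -> Prop) : Prop :=
  exists (Q : Type) (q0 : Q) (delta : Q -> A -> Q) (acc : Q -> Prop),
    Finite Q /\ forall w, F w <-> acc (fold_left delta w q0).

(** decidable languages: w.r.t. some enumeration [L] of the finite alphabet,
    the set of codes of forbidden words is decidable *)
Definition decidable_lang (F : list A -> Prop) : Prop :=
  exists L : list A, NoDup L /\ (forall a, In a L) /\
    decidable_nat (fun c => exists w ns,
       Forall2 (fun a n => nth_error L n = Some a) w ns /\
       c = code_list ns /\ F w).

Definition sofic_subshift (Y : (Z -> A) -> Prop) : Prop :=
  exists F, regular F /\ forall x, Y x <-> XF F x.

Definition effective_subshift (Y : (Z -> A) -> Prop) : Prop :=
  exists F, decidable_lang F /\ forall x, Y x <-> XF F x.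

Definition shift (x : Z -> A) : Z -> A := fun i => x (i + 1).

End Subshifts.

Definition inSS {G : Type} (inv : G -> G) (S : list G) (g : G) : Prop :=
  exists s, In s S /\ (g = s \/ g = inv s).

Definition Ltr {G : Type} (inv : G -> G) (S : list G) : Type := {g : G | inSS inv S g}.

Section GroupNotions.
Context {G : Type} (mul : G -> G -> G) (one : G) (inv : G -> G) (S : list G).
Local Notation Ltr := (Ltr inv S).


Definition word_eval (w : list Ltr) : G :=
  fold_right (fun a acc => mul (proj1_sig a) acc) one w.

Definition generates : Prop := forall g : G, exists w : list Ltr, word_eval w = g.

Definition skeleton (x : Z -> Ltr) : Prop :=
  forall i n, (0 < n)%nat -> word_eval (factor x i n) <> one.

Definition skeletal (Y : (Z -> Ltr) -> Prop) : Prop :=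
  (forall x, Y x -> skeleton x) /\ (forall x, Y x <-> Y (shift x)).

Definition tileset_graph {V : Type} (B : V -> V -> Ltr -> Prop) : Prop :=
  Finite V /\
  forall a a' s, B a a' s ->
    exists t : Ltr, proj1_sig t = inv (proj1_sig s) /\ B a' a t.

Definition XGamma {V : Type} (B : V -> V -> Ltr -> Prop) (x : Z -> Ltr) : Prop :=
  exists zeta : Z -> V, forall i, B (zeta i) (zeta (i + 1)) (x i).

(** bi-infinite Γ-snake (ω, ζ); [d] is the sequence dω *)
Definition snake {V : Type} (B : V -> V -> Ltr -> Prop)
    (omega : Z -> G) (zeta : Z -> V) (d : Z -> Ltr) : Prop :=
  (forall i j, omega i = omega j -> i = j) /\
  forall i, proj1_sig (d i) = mul (inv (omega i)) (omega (i + 1)) /\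
            B (zeta i) (zeta (i + 1)) (d i).

End GroupNotions.

From Stdlib Require Import ZArith List Lia Arith Classical ClassicalEpsilon
  FunctionalExtensionality PropExtensionality.
Import ListNotations.

(* A skeleton sequence x integrates to the path omega(i) = x_0 ... x_(i-1) in G, which is
   injective because omega(i) = omega(j) with i < j would make the factor x_i ... x_(j-1)
   represent 1; hence a path of Gamma labelled by x in Y is a snake, and conversely the
   increments of a snake are read along its path.
   For the second part, X_Gamma = X_(F_Gamma) where F_Gamma is the set of words labelling
   no walk of Gamma: by Koenig's lemma (Gamma is finite) a sequence all of whose factors
   label walks labels a bi-infinite path. F_Gamma is regular by the subset construction,
   and regular languages are decidable, so if Y = X_F then X = X_(F u F_Gamma) with
   F u F_Gamma regular (resp. decidable) whenever F is. *)

Open Scope nat_scope.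

(** * Mu-recursive functions *)

Definition recf_nested_ind (P : recf -> Prop)
  (HZero : P RZero) (HSucc : P RSucc) (HProj : forall i, P (RProj i))
  (HComp : forall f gs, P f -> Forall P gs -> P (RComp f gs))
  (HPrec : forall f g, P f -> P g -> P (RPrec f g))
  (HMu : forall f, P f -> P (RMu f)) : forall f, P f :=
  fix F f := match f with
  | RZero => HZero | RSucc => HSucc | RProj i => HProj i
  | RComp f gs => HComp f gs (F f)
      ((fix Fs l : Forall P l := match l with
         | [] => Forall_nil _
         | g :: t => Forall_cons _ (F g) (Fs t) end) gs)
  | RPrec f g => HPrec f g (F f) (F g)
  | RMu f => HMu f (F f) end.

Lemma reval_functional f v y y' : reval f v y -> reval f v y' -> y = y'.
Proof.
  revert v y y'.
  induction f as [| | i | f gs IHf IHgs | f g IHf IHg | f IHf] using recf_nested_ind;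
    intros v y y' Hy Hy'.
  - inversion Hy; inversion Hy'; subst; auto.
  - inversion Hy; inversion Hy'; subst; congruence.
  - inversion Hy; inversion Hy'; subst; congruence.
  - inversion Hy as [| | | ? ? ? ys ? Hys Hf | | |]; subst.
    inversion Hy' as [| | | ? ? ? ys' ? Hys' Hf' | | |]; subst.
    assert (ys = ys') as <-; [|eauto].
    clear Hf Hf' Hy Hy'; revert ys ys' Hys Hys'.
    induction IHgs; intros ys ys' Hys Hys'.
    + inversion Hys; inversion Hys'; subst; auto.
    + inversion Hys; inversion Hys'; subst; f_equal; eauto.
  - destruct v as [|n v]; [inversion Hy|].
    revert y y' Hy Hy'; induction n; intros y y' Hy Hy'.
    + inversion Hy; inversion Hy'; subst; eauto.
    + inversion Hy; inversion Hy'; subst.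
      assert (z = z0) as <- by eauto; eauto.
  - inversion Hy as [| | | | | | ? ? ? Hzero Hpos]; subst.
    inversion Hy' as [| | | | | | ? ? ? Hzero' Hpos']; subst.
    destruct (lt_eq_lt_dec y y') as [[Hlt | Heq] | Hlt]; auto.
    + destruct (Hpos' _ Hlt) as [k Hk]; discriminate (IHf _ _ _ Hzero Hk).
    + destruct (Hpos _ Hlt) as [k Hk]; discriminate (IHf _ _ _ Hzero' Hk).
Qed.

Definition computable1 (h : nat -> nat) : Prop :=
  exists F, forall x, reval F [x] (h x).
Definition computable2 (h : nat -> nat -> nat) : Prop :=
  exists F, forall x y, reval F [x; y] (h x y).
Definition computable3 (h : nat -> nat -> nat -> nat) : Prop :=
  exists F, forall x y z, reval F [x; y; z] (h x y z).

Lemma computable1_ext h h' : computable1 h -> (forall x, h x = h' x) -> computable1 h'.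
Proof. intros [F HF] E; exists F; intros; rewrite <- E; auto. Qed.
Lemma computable2_ext h h' :
  computable2 h -> (forall x y, h x y = h' x y) -> computable2 h'.
Proof. intros [F HF] E; exists F; intros; rewrite <- E; auto. Qed.

Fixpoint rconst (c : nat) : recf :=
  match c with 0 => RZero | S c => RComp RSucc [rconst c] end.

Lemma reval_rconst c v : reval (rconst c) v c.
Proof. induction c; repeat econstructor; eauto. Qed.

Lemma computable1_const c : computable1 (fun _ => c).
Proof. exists (rconst c); intros; apply reval_rconst. Qed.
Lemma computable2_const c : computable2 (fun _ _ => c).
Proof. exists (rconst c); intros; apply reval_rconst. Qed.
Lemma computable1_id : computable1 (fun x => x).
Proof. exists (RProj 0); intros; constructor; reflexivity. Qed.
Lemma computable1_succ : computable1 S.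
Proof. exists RSucc; intros; constructor. Qed.
Lemma computable2_proj0 : computable2 (fun x _ => x).
Proof. exists (RProj 0); intros; constructor; reflexivity. Qed.
Lemma computable2_proj1 : computable2 (fun _ y => y).
Proof. exists (RProj 1); intros; constructor; reflexivity. Qed.
Lemma computable3_proj0 : computable3 (fun x _ _ => x).
Proof. exists (RProj 0); intros; constructor; reflexivity. Qed.
Lemma computable3_proj1 : computable3 (fun _ y _ => y).
Proof. exists (RProj 1); intros; constructor; reflexivity. Qed.
Lemma computable3_proj2 : computable3 (fun _ _ z => z).
Proof. exists (RProj 2); intros; constructor; reflexivity. Qed.

Lemma computable1_comp1 h g : computable1 h -> computable1 g -> computable1 (fun x => h (g x)).
Proof. intros [Fh Hh] [Fg Hg]; exists (RComp Fh [Fg]); repeat econstructor; eauto. Qed.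
Lemma computable1_comp2 h g1 g2 :
  computable2 h -> computable1 g1 -> computable1 g2 -> computable1 (fun x => h (g1 x) (g2 x)).
Proof. intros [Fh Hh] [F1 H1] [F2 H2]; exists (RComp Fh [F1; F2]); repeat econstructor; eauto. Qed.
Lemma computable2_comp1 h g :
  computable1 h -> computable2 g -> computable2 (fun x y => h (g x y)).
Proof. intros [Fh Hh] [Fg Hg]; exists (RComp Fh [Fg]); repeat econstructor; eauto. Qed.
Lemma computable2_comp2 h g1 g2 : computable2 h -> computable2 g1 -> computable2 g2 ->
  computable2 (fun x y => h (g1 x y) (g2 x y)).
Proof. intros [Fh Hh] [F1 H1] [F2 H2]; exists (RComp Fh [F1; F2]); repeat econstructor; eauto. Qed.
Lemma computable3_comp1 h g :
  computable1 h -> computable3 g -> computable3 (fun x y z => h (g x y z)).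
Proof. intros [Fh Hh] [Fg Hg]; exists (RComp Fh [Fg]); repeat econstructor; eauto. Qed.
Lemma computable3_comp2 h g1 g2 : computable2 h -> computable3 g1 -> computable3 g2 ->
  computable3 (fun x y z => h (g1 x y z) (g2 x y z)).
Proof. intros [Fh Hh] [F1 H1] [F2 H2]; exists (RComp Fh [F1; F2]); repeat econstructor; eauto. Qed.

Lemma computable1_rect b s : computable2 s ->
  computable1 (fun n => nat_rect (fun _ => nat) b (fun k r => s k r) n).
Proof.
  intros [Fs Hs]; exists (RPrec (rconst b) Fs); intro n; induction n; simpl.
  - constructor; apply reval_rconst.
  - econstructor; eauto.
Qed.

Lemma computable2_rect b s : computable1 b -> computable3 s ->
  computable2 (fun n x => nat_rect (fun _ => nat) (b x) (fun k r => s k r x) n).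
Proof.
  intros [Fb Hb] [Fs Hs]; exists (RPrec Fb Fs); intros n x; induction n; simpl.
  - constructor; auto.
  - econstructor; eauto.
Qed.

Lemma computable1_mu f g : computable2 f ->
  (forall x, f (g x) x = 0 /\ forall m, m < g x -> f m x <> 0) -> computable1 g.
Proof.
  intros [Ff Hf] Hg; exists (RMu Ff); intro x; destruct (Hg x) as [Hzero Hpos]; constructor.
  - rewrite <- Hzero; auto.
  - intros m Hm; specialize (Hpos m Hm).
    destruct (f m x) as [|k] eqn:E; [congruence|]; exists k; rewrite <- E; auto.
Qed.

Lemma computable2_add : computable2 Nat.add.
Proof.
  eapply computable2_ext.
  - apply (computable2_rect (fun x => x) (fun _ r _ => S r)).
    + apply computable1_id.
    + apply computable3_comp1; [apply computable1_succ | apply computable3_proj1].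
  - intros n x; induction n; simpl; auto.
Qed.

Lemma computable2_mul : computable2 Nat.mul.
Proof.
  eapply computable2_ext.
  - apply (computable2_rect (fun _ => 0) (fun _ r x => r + x)).
    + apply computable1_const.
    + apply computable3_comp2; [apply computable2_add | apply computable3_proj1 | apply computable3_proj2].
  - intros n x; induction n; simpl; lia.
Qed.

Lemma computable1_pred : computable1 pred.
Proof.
  eapply computable1_ext.
  - apply (computable1_rect 0 (fun k _ => k)), computable2_proj0.
  - intros [|n]; reflexivity.
Qed.

Lemma computable2_sub : computable2 Nat.sub.
Proof.
  assert (Hsub : computable2 (fun n x => x - n)).
  { eapply computable2_ext.
    - apply (computable2_rect (fun x => x) (fun _ r _ => pred r)).
      + apply computable1_id.
      + apply computable3_comp1; [apply computable1_pred | apply computable3_proj1].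
    - intros n x; induction n; simpl; lia. }
  apply (computable2_comp2 _ _ _ Hsub computable2_proj1 computable2_proj0).
Qed.

Definition sg (n : nat) : nat := match n with 0 => 0 | _ => 1 end.

Lemma computable1_sg : computable1 sg.
Proof.
  eapply computable1_ext.
  - apply (computable1_rect 0 (fun _ _ => 1)), computable2_const.
  - intros [|n]; reflexivity.
Qed.

Lemma computable1_indicator N : computable1 (fun x => if x =? N then 1 else 0).
Proof.
  eapply computable1_ext.
  - apply (computable1_comp2 Nat.sub (fun _ => 1) (fun x => sg ((x - N) + (N - x)))).
    + apply computable2_sub.
    + apply computable1_const.
    + apply computable1_comp1; [apply computable1_sg|].
      apply computable1_comp2; [apply computable2_add | |].
      * apply computable1_comp2; [apply computable2_sub | apply computable1_id | apply computable1_const].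
      * apply computable1_comp2; [apply computable2_sub | apply computable1_const | apply computable1_id].
  - intro x; destruct (Nat.eqb_spec x N) as [->|Hne].
    + rewrite Nat.sub_diag; reflexivity.
    + destruct (x - N + (N - x)) eqn:E; [lia | reflexivity].
Qed.

(* A finitely supported function is a finite sum of [indicator * constant] terms. *)
Lemma computable1_of_bounded_support K h : (forall a, K <= a -> h a = 0) -> computable1 h.
Proof.
  revert h; induction K as [|K IHK]; intros h Hh.
  - apply (computable1_ext (fun _ => 0)); [apply computable1_const | intros; rewrite Hh; lia].
  - assert (Hlow : computable1 (fun a => if a =? K then 0 else h a)).
    { apply IHK; intros a Ha; destruct (Nat.eqb_spec a K); auto; apply Hh; lia. }
    eapply computable1_ext.
    + apply (computable1_comp2 Nat.add _ (fun a => (if a =? K then 1 else 0) * h K)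
               computable2_add Hlow).
      apply computable1_comp2;
        [apply computable2_mul | apply computable1_indicator | apply computable1_const].
    + intro a; simpl; destruct (Nat.eqb_spec a K); subst; lia.
Qed.

Lemma computable2_of_bounded_support N K h :
  (forall i a, N <= i \/ K <= a -> h i a = 0) -> computable2 h.
Proof.
  revert h; induction N as [|N IHN]; intros h Hh.
  - apply (computable2_ext (fun _ _ => 0)); [apply computable2_const | intros; rewrite Hh; lia].
  - assert (Hlow : computable2 (fun i a => if i =? N then 0 else h i a)).
    { apply IHN; intros i a Hia; destruct (Nat.eqb_spec i N); auto; apply Hh; lia. }
    assert (Hrow : computable1 (h N)).
    { apply (computable1_of_bounded_support K); intros; apply Hh; lia. }
    eapply computable2_ext.
    + apply (computable2_comp2 Nat.add _ (fun i a => (if i =? N then 1 else 0) * h N a)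
               computable2_add Hlow).
      apply computable2_comp2; [apply computable2_mul | |].
      * apply (computable2_comp1 _ (fun i _ => i)); [apply computable1_indicator | apply computable2_proj0].
      * apply (computable2_comp1 _ (fun _ a => a)); [exact Hrow | apply computable2_proj1].
    + intros i a; simpl; destruct (Nat.eqb_spec i N); subst; lia.
Qed.

Fixpoint triangle (n : nat) : nat := match n with 0 => 0 | S m => triangle m + S m end.

Lemma cpair_triangle x y : cpair x y = triangle (x + y) + y.
Proof.
  assert (Htwice : forall n, 2 * triangle n = n * (n + 1)) by (intro n; induction n; simpl triangle; nia).
  unfold cpair; rewrite <- Htwice, Nat.mul_comm, Nat.div_mul; lia.
Qed.

Lemma triangle_monotone m n : m <= n -> triangle m <= triangle n.
Proof. induction 1; simpl; lia. Qed.

Lemma cpair_inj x y x' y' : cpair x y = cpair x' y' -> x = x' /\ y = y'.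
Proof.
  rewrite !cpair_triangle; intro E.
  assert (x + y = x' + y') as Hsum.
  { destruct (lt_eq_lt_dec (x + y) (x' + y')) as [[Hlt|Heq]|Hlt]; auto;
      pose proof (triangle_monotone _ _ Hlt); simpl in *; lia. }
  rewrite Hsum in E; lia.
Qed.

(* [unpair] walks the Cantor enumeration diagonal by diagonal. *)
Fixpoint unpair (z : nat) : nat * nat :=
  match z with
  | 0 => (0, 0)
  | S z => let (x, y) := unpair z in
           match x with 0 => (S y, 0) | S x => (x, S y) end
  end.

Lemma cpair_unpair z : cpair (fst (unpair z)) (snd (unpair z)) = z.
Proof.
  induction z as [|z IHz]; [reflexivity|]; simpl.
  destruct (unpair z) as [x y]; simpl in *.
  rewrite cpair_triangle in *; destruct x; simpl; rewrite <- IHz.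
  - rewrite !Nat.add_0_r; simpl; lia.
  - replace (x + S y) with (S x + y) by lia; lia.
Qed.

Lemma unpair_cpair x y : unpair (cpair x y) = (x, y).
Proof.
  pose proof (cpair_unpair (cpair x y)) as E; apply cpair_inj in E.
  destruct (unpair (cpair x y)); simpl in *; destruct E; subst; auto.
Qed.

Definition pair_diagonal (z : nat) : nat := fst (unpair z) + snd (unpair z).
Definition csnd (z : nat) : nat := z - triangle (pair_diagonal z).
Definition cfst (z : nat) : nat := pair_diagonal z - csnd z.

Lemma cfst_cpair x y : cfst (cpair x y) = x.
Proof. unfold cfst, csnd, pair_diagonal; rewrite unpair_cpair, cpair_triangle; simpl; lia. Qed.

Lemma csnd_cpair x y : csnd (cpair x y) = y.
Proof. unfold csnd, pair_diagonal; rewrite unpair_cpair, cpair_triangle; simpl; lia. Qed.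

Lemma computable1_triangle : computable1 triangle.
Proof.
  eapply computable1_ext.
  - apply (computable1_rect 0 (fun k r => r + S k)).
    apply computable2_comp2; [apply computable2_add | apply computable2_proj1 |].
    apply (computable2_comp1 S (fun k _ => k)); [apply computable1_succ | apply computable2_proj0].
  - intro n; induction n; simpl; auto.
Qed.

(* The diagonal of [z] is the least [t] with [z < triangle (S t)]. *)
Lemma computable1_pair_diagonal : computable1 pair_diagonal.
Proof.
  apply (computable1_mu (fun t z => S z - triangle (S t))).
  - apply computable2_comp2; [apply computable2_sub | |].
    + apply (computable2_comp1 S (fun _ z => z)); [apply computable1_succ | apply computable2_proj1].
    + apply (computable2_comp1 (fun t => triangle (S t)) (fun t _ => t)); [|apply computable2_proj0].
      apply computable1_comp1; [apply computable1_triangle | apply computable1_succ].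
  - intro z; pose proof (cpair_unpair z) as E; rewrite cpair_triangle in E.
    unfold pair_diagonal; split.
    + simpl triangle; lia.
    + intros m Hm; pose proof (triangle_monotone (S m) _ Hm); lia.
Qed.

Lemma computable1_csnd : computable1 csnd.
Proof.
  apply computable1_comp2; [apply computable2_sub | apply computable1_id |].
  apply computable1_comp1; [apply computable1_triangle | apply computable1_pair_diagonal].
Qed.

Lemma computable1_cfst : computable1 cfst.
Proof.
  apply computable1_comp2;
    [apply computable2_sub | apply computable1_pair_diagonal | apply computable1_csnd].
Qed.

Lemma code_list_inj l l' : code_list l = code_list l' -> l = l'.
Proof.
  revert l'; induction l; destruct l'; simpl; intro E; try discriminate; auto.
  injection E as E; apply cpair_inj in E as [-> E]; f_equal; auto.
Qed.

Lemma code_list_surj c : exists l, c = code_list l.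
Proof.
  induction c as [c IH] using (well_founded_induction lt_wf).
  destruct c as [|c]; [exists []; reflexivity|].
  pose proof (cpair_unpair c) as E.
  destruct (IH (snd (unpair c))) as [l Hl]; [rewrite cpair_triangle in E; lia|].
  exists (fst (unpair c) :: l); simpl; rewrite <- Hl, E; reflexivity.
Qed.

Lemma length_le_code_list l : length l <= code_list l.
Proof. induction l; simpl; auto; rewrite cpair_triangle; lia. Qed.

Definition characteristic (P : nat -> Prop) (chi : nat -> nat) : Prop :=
  forall n, chi n <= 1 /\ (P n <-> chi n = 1).

Lemma decidable_nat_iff P :
  decidable_nat P <-> exists chi, computable1 chi /\ characteristic P chi.
Proof.
  split.
  - intros [F [Htotal HP]].
    destruct (choice _ Htotal) as [chi Hchi].
    exists chi; split; [exists F; intro n; apply Hchi|].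
    intro n; destruct (Hchi n) as [Hev Hle]; split; auto.
    rewrite HP; split; intro H; [eapply reval_functional|rewrite <- H]; eauto.
  - intros [chi [[F HF] Hchi]]; exists F; split.
    + intro n; exists (chi n); split; auto; apply Hchi.
    + intro n; rewrite (proj2 (Hchi n)); split; intro H;
        [rewrite <- H | eapply reval_functional]; eauto.
Qed.

Lemma decidable_nat_ext (P P' : nat -> Prop) :
  decidable_nat P -> (forall n, P n <-> P' n) -> decidable_nat P'.
Proof. intros [F [Htotal HP]] E; exists F; split; auto; intro n; rewrite <- E; auto. Qed.

Lemma decidable_nat_or P1 P2 :
  decidable_nat P1 -> decidable_nat P2 -> decidable_nat (fun n => P1 n \/ P2 n).
Proof.
  rewrite !decidable_nat_iff; intros [c1 [Hc1 H1]] [c2 [Hc2 H2]].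
  exists (fun n => sg (c1 n + c2 n)); split.
  - apply computable1_comp1; [apply computable1_sg|].
    apply computable1_comp2; auto; apply computable2_add.
  - intro n; destruct (H1 n) as [Hle1 ->], (H2 n) as [Hle2 ->].
    destruct (c1 n) as [|[|]], (c2 n) as [|[|]]; simpl; lia.
Qed.

(** * Regular languages are decidable *)

Definition word_codes {A : Type} (L : list A) (F : list A -> Prop) (c : nat) : Prop :=
  exists w ns, Forall2 (fun a n => nth_error L n = Some a) w ns /\ c = code_list ns /\ F w.

Section RegularDecidable.
Context {A Q : Type} (L : list A) (q0 : Q) (delta : Q -> A -> Q) (acc : Q -> Prop)
  (lQ : list Q) (HlQ : forall q, In q lQ).

Definition state_index (q : Q) : nat :=
  proj1_sig (constructive_indefinite_description _ (In_nth_error _ _ (HlQ q))).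

Lemma nth_error_state_index q : nth_error lQ (state_index q) = Some q.
Proof. unfold state_index; destruct constructive_indefinite_description; auto. Qed.

(* States are coded by [S (state_index q)]; the code [0] is a dead state, entered on
   a letter index outside [L]. *)
Definition step_code (s a : nat) : nat :=
  match s with
  | 0 => 0
  | S i => match nth_error lQ i, nth_error L a with
           | Some q, Some l => S (state_index (delta q l))
           | _, _ => 0
           end
  end.

Definition accept_code (s : nat) : nat :=
  match s with
  | 0 => 0
  | S i => match nth_error lQ i with
           | Some q => if excluded_middle_informative (acc q) then 1 else 0
           | None => 0
           end
  end.

Definition tail_code (c : nat) : nat := match c with 0 => 0 | S c => csnd c end.
Definition step_head (c s : nat) : nat := match c with 0 => s | S c => step_code s (cfst c) end.
Definition drop_codes (k c : nat) : nat := nat_rect (fun _ => nat) c (fun _ r => tail_code r) k.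
Definition run_codes (k c : nat) : nat :=
  nat_rect (fun _ => nat) (S (state_index q0)) (fun k s => step_head (drop_codes k c) s) k.
(* A list is no longer than its code, so [c] steps of [run_codes] read all of it. *)
Definition dfa_characteristic (c : nat) : nat := accept_code (run_codes c c).

Lemma computable2_step_code : computable2 step_code.
Proof.
  apply (computable2_of_bounded_support (S (length lQ)) (length L)).
  intros [|i] a Hia; simpl; auto.
  destruct (nth_error lQ i) eqn:Ei; auto.
  assert (i < length lQ) by (apply nth_error_Some; congruence).
  rewrite (proj2 (nth_error_None L a)); auto; lia.
Qed.

Lemma computable1_accept_code : computable1 accept_code.
Proof.
  apply (computable1_of_bounded_support (S (length lQ))).
  intros [|i] Hi; simpl; auto.
  rewrite (proj2 (nth_error_None lQ i)); auto; lia.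
Qed.

Lemma computable1_dfa_characteristic : computable1 dfa_characteristic.
Proof.
  assert (Htail : computable1 tail_code).
  { eapply computable1_ext.
    - apply (computable1_rect 0 (fun k _ => csnd k)).
      apply (computable2_comp1 csnd (fun k _ => k)); [apply computable1_csnd | apply computable2_proj0].
    - intros [|c]; reflexivity. }
  assert (Hhead : computable2 step_head).
  { eapply computable2_ext.
    - apply (computable2_rect (fun s => s) (fun k _ s => step_code s (cfst k))).
      + apply computable1_id.
      + apply computable3_comp2; [apply computable2_step_code | apply computable3_proj2 |].
        apply (computable3_comp1 cfst (fun k _ _ => k)); [apply computable1_cfst | apply computable3_proj0].
    - intros [|c] s; reflexivity. }
  assert (Hdrop : computable2 drop_codes).
  { apply (computable2_rect (fun c => c) (fun _ r _ => tail_code r)); [apply computable1_id|].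
    apply (computable3_comp1 tail_code (fun _ r _ => r)); [exact Htail | apply computable3_proj1]. }
  assert (Hrun : computable2 run_codes).
  { apply (computable2_rect (fun _ => S (state_index q0)) (fun k s c => step_head (drop_codes k c) s));
      [apply computable1_const|].
    apply computable3_comp2; [exact Hhead | | apply computable3_proj1].
    apply (computable3_comp2 drop_codes (fun k _ _ => k) (fun _ _ c => c));
      [exact Hdrop | apply computable3_proj0 | apply computable3_proj2]. }
  unfold dfa_characteristic; apply computable1_comp1; [apply computable1_accept_code|].
  apply computable1_comp2; [exact Hrun | apply computable1_id | apply computable1_id].
Qed.

Lemma drop_codes_code_list k ns : drop_codes k (code_list ns) = code_list (skipn k ns).
Proof.
  induction k as [|k IHk]; [reflexivity|].
  change (drop_codes (S k) (code_list ns)) with (tail_code (drop_codes k (code_list ns))).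
  rewrite IHk; replace (skipn (S k) ns) with (skipn 1 (skipn k ns))
    by (rewrite skipn_skipn; f_equal; lia).
  destruct (skipn k ns); simpl; auto; rewrite csnd_cpair; reflexivity.
Qed.

Lemma firstn_S_skipn k (ns : list nat) n t :
  skipn k ns = n :: t -> firstn (S k) ns = firstn k ns ++ [n].
Proof.
  revert ns; induction k as [|k IHk]; intros [|m ns] E; simpl in *; try discriminate.
  - injection E as -> ->; reflexivity.
  - rewrite <- (IHk _ E); reflexivity.
Qed.

Lemma run_codes_code_list k ns :
  run_codes k (code_list ns) = fold_left step_code (firstn k ns) (S (state_index q0)).
Proof.
  induction k as [|k IHk]; [reflexivity|].
  change (run_codes (S k) (code_list ns))
    with (step_head (drop_codes k (code_list ns)) (run_codes k (code_list ns))).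
  rewrite IHk, drop_codes_code_list.
  destruct (skipn k ns) eqn:E; cbn [code_list step_head].
  - assert (length ns <= k) by (pose proof (length_skipn k ns) as Hl; rewrite E in Hl; simpl in Hl; lia).
    rewrite !firstn_all2; auto; lia.
  - rewrite (firstn_S_skipn _ _ _ _ E), fold_left_app; simpl; rewrite cfst_cpair; reflexivity.
Qed.

Lemma dfa_characteristic_code_list ns :
  dfa_characteristic (code_list ns) = accept_code (fold_left step_code ns (S (state_index q0))).
Proof.
  unfold dfa_characteristic; rewrite run_codes_code_list, firstn_all2; auto.
  apply length_le_code_list.
Qed.

Lemma fold_step_code_valid w ns : Forall2 (fun a n => nth_error L n = Some a) w ns ->
  forall q, fold_left step_code ns (S (state_index q)) = S (state_index (fold_left delta w q)).
Proof.
  induction 1 as [|a n w ns Ha _ IH]; intro q; simpl; auto.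
  rewrite nth_error_state_index, Ha; apply IH.
Qed.

Lemma fold_step_code_dead ns : fold_left step_code ns 0 = 0.
Proof. induction ns; simpl; auto. Qed.

Lemma fold_step_code_invalid ns :
  ~ (exists w, Forall2 (fun a n => nth_error L n = Some a) w ns) ->
  forall q, fold_left step_code ns (S (state_index q)) = 0.
Proof.
  induction ns as [|n ns IH]; intros Hns q.
  - exfalso; apply Hns; exists []; constructor.
  - simpl; rewrite nth_error_state_index.
    destruct (nth_error L n) as [a|] eqn:E.
    + apply IH; intros [w Hw]; apply Hns; exists (a :: w); constructor; auto.
    + apply fold_step_code_dead.
Qed.

Lemma Forall2_nth_error_functional w w' ns :
  Forall2 (fun a n => nth_error L n = Some a) w ns ->
  Forall2 (fun a n => nth_error L n = Some a) w' ns -> w = w'.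
Proof.
  intros Hw; revert w'; induction Hw as [|a n w ns Ha _ IH]; intros w' Hw';
    inversion Hw' as [|a' n' w'' ns' Ha' Hrest]; subst; auto.
  rewrite Ha in Ha'; injection Ha' as ->; f_equal; auto.
Qed.

Lemma dfa_word_codes_decidable (F : list A -> Prop) :
  (forall w, F w <-> acc (fold_left delta w q0)) -> decidable_nat (word_codes L F).
Proof.
  intro HF; apply decidable_nat_iff; exists dfa_characteristic.
  split; [apply computable1_dfa_characteristic|]; intro c.
  destruct (code_list_surj c) as [ns ->]; rewrite dfa_characteristic_code_list.
  destruct (classic (exists w, Forall2 (fun a n => nth_error L n = Some a) w ns)) as [[w Hw]|Hns].
  - rewrite (fold_step_code_valid _ _ Hw); simpl; rewrite nth_error_state_index.
    destruct excluded_middle_informative as [Hacc|Hrej]; split; auto; split; intro H; auto.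
    + exists w, ns; repeat split; auto; apply HF; auto.
    + destruct H as (w' & ns' & Hw' & Hc & HFw).
      apply code_list_inj in Hc; subst ns'.
      rewrite (Forall2_nth_error_functional _ _ _ Hw Hw'), <- HF in Hrej; contradiction.
    + discriminate.
  - rewrite fold_step_code_invalid; auto; simpl; split; auto; split; intro H; [|discriminate].
    destruct H as (w' & ns' & Hw' & Hc & _); apply code_list_inj in Hc; subst ns'.
    exfalso; eauto.
Qed.

End RegularDecidable.

Lemma regular_or {A : Type} (F1 F2 : list A -> Prop) :
  regular F1 -> regular F2 -> regular (fun w => F1 w \/ F2 w).
Proof.
  intros (Q1 & q1 & d1 & a1 & [l1 Hl1] & E1) (Q2 & q2 & d2 & a2 & [l2 Hl2] & E2).
  exists (Q1 * Q2)%type, (q1, q2), (fun p a => (d1 (fst p) a, d2 (snd p) a)),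
    (fun p => a1 (fst p) \/ a2 (snd p)); split.
  - exists (list_prod l1 l2); intros [u v]; apply in_prod; auto.
  - intro w.
    assert (Hrun : forall p, fold_left (fun p a => (d1 (fst p) a, d2 (snd p) a)) w p =
                             (fold_left d1 w (fst p), fold_left d2 w (snd p)))
      by (induction w; intros [u v]; simpl; auto).
    rewrite Hrun, E1, E2; reflexivity.
Qed.

Lemma decidable_lang_or_regular {A : Type} (F1 F2 : list A -> Prop) :
  decidable_lang F1 -> regular F2 -> decidable_lang (fun w => F1 w \/ F2 w).
Proof.
  intros (L & HL & HLall & Hdec) (Q & q0 & delta & acc & [lQ HlQ] & HF2).
  exists L; repeat split; auto.
  eapply decidable_nat_ext;
    [apply (decidable_nat_or _ _ Hdec (dfa_word_codes_decidable L q0 delta acc lQ HlQ F2 HF2))|].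
  intro n; split.
  - intros [(w & ns & ?) | (w & ns & ?)]; exists w, ns; intuition.
  - intros (w & ns & Hw & Hc & [HF|HF]); [left|right]; exists w, ns; auto.
Qed.

Open Scope Z_scope.

(** * Walks in a finite graph and Koenig's lemma *)

Lemma factor_S {A : Type} (x : Z -> A) i n : factor x i (S n) = x i :: factor x (i + 1) n.
Proof.
  unfold factor; simpl; rewrite <- seq_shift, map_map; f_equal.
  - f_equal; lia.
  - apply map_ext; intro k; f_equal; lia.
Qed.

Lemma length_factor {A : Type} (x : Z -> A) i n : length (factor x i n) = n.
Proof. unfold factor; rewrite length_map, length_seq; reflexivity. Qed.

Lemma XF_or {A : Type} (F1 F2 : list A -> Prop) x :
  XF (fun w => F1 w \/ F2 w) x <-> XF F1 x /\ XF F2 x.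
Proof. unfold XF; firstorder. Qed.

Lemma Z_dependent_choice {V : Type} (P : Z -> V -> Prop) (R : Z -> V -> V -> Prop) v0 :
  P 0 v0 ->
  (forall i v, P i v -> exists v', R i v v' /\ P (i + 1) v') ->
  (forall i v, P i v -> exists u, R (i - 1) u v /\ P (i - 1) u) ->
  exists z : Z -> V, forall i, R i (z i) (z (i + 1)).
Proof.
  intros H0 Hfwd Hbwd.
  assert (Hf : forall iv : Z * V, exists v',
            P (fst iv) (snd iv) -> R (fst iv) (snd iv) v' /\ P (fst iv + 1) v').
  { intros [i v]; destruct (classic (P i v)) as [H|H];
      [destruct (Hfwd i v H) as [v' ?]; eauto | exists v; tauto]. }
  assert (Hb : forall iv : Z * V, exists u,
            P (fst iv) (snd iv) -> R (fst iv - 1) u (snd iv) /\ P (fst iv - 1) u).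
  { intros [i v]; destruct (classic (P i v)) as [H|H];
      [destruct (Hbwd i v H) as [u ?]; eauto | exists v; tauto]. }
  destruct (choice _ Hf) as [f Hfs], (choice _ Hb) as [g Hgs].
  set (fw := fix fw (k : nat) : V := match k with O => v0 | S k => f (Z.of_nat k, fw k) end).
  set (bw := fix bw (k : nat) : V := match k with O => v0 | S k => g (- Z.of_nat k, bw k) end).
  assert (Hfw : forall k, P (Z.of_nat k) (fw k)).
  { induction k; simpl; auto.
    replace (Z.pos (Pos.of_succ_nat k)) with (Z.of_nat k + 1) by lia; apply (Hfs (_, _)); auto. }
  assert (Hbw : forall k, P (- Z.of_nat k) (bw k)).
  { induction k; simpl; auto.
    replace (Z.neg (Pos.of_succ_nat k)) with (- Z.of_nat k - 1) by lia; apply (Hgs (_, _)); auto. }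
  exists (fun i => if 0 <=? i then fw (Z.to_nat i) else bw (Z.to_nat (- i))); intro i.
  destruct (Z.leb_spec 0 i), (Z.leb_spec 0 (i + 1)); try lia.
  - replace (Z.to_nat (i + 1)) with (S (Z.to_nat i)) by lia; simpl.
    pose proof (Hfs (_, _) (Hfw (Z.to_nat i))) as [Hstep _]; simpl in Hstep.
    rewrite Z2Nat.id in Hstep |- * by lia; exact Hstep.
  - replace i with (-1) by lia; exact (proj1 (Hgs (0, v0) H0)).
  - replace (Z.to_nat (- i)) with (S (Z.to_nat (- (i + 1)))) by lia; simpl.
    pose proof (Hgs (_, _) (Hbw (Z.to_nat (- (i + 1))))) as [Hstep _]; simpl in Hstep.
    replace (- Z.of_nat (Z.to_nat (- (i + 1))) - 1) with i in Hstep by lia; exact Hstep.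
Qed.

Lemma pigeonhole_antitone {V : Type} (lV : list V) (HV : forall v, In v lV)
  (Pr : V -> nat -> Prop) :
  (forall v n m, (n <= m)%nat -> Pr v m -> Pr v n) ->
  (forall N, exists v, Pr v N) -> exists v, forall n, Pr v n.
Proof.
  intros Hanti Hex; apply NNPP; intro Hnone.
  assert (Hfail : forall v, exists n, ~ Pr v n)
    by (intro v; apply not_all_ex_not; intro Hall; apply Hnone; eauto).
  assert (Hbound : forall l, exists N, forall v, In v l -> ~ Pr v N).
  { induction l as [|a l [N HN]]; [exists 0%nat; simpl; tauto|].
    destruct (Hfail a) as [na Hna]; exists (Nat.max na N); intros v [<-|Hv] Hp.
    - apply Hna; eapply Hanti; [|eauto]; lia.
    - apply (HN v Hv); eapply Hanti; [|eauto]; lia. }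
  destruct (Hbound lV) as [N HN], (Hex N) as [v Hv]; exact (HN v (HV v) Hv).
Qed.

Section Walks.
Context {V T : Type} (B : V -> V -> T -> Prop).

Fixpoint walk (v : V) (w : list T) (v' : V) : Prop :=
  match w with [] => v = v' | a :: w => exists u, B v u a /\ walk u w v' end.

Definition nowalk (w : list T) : Prop := forall v v', ~ walk v w v'.

Definition successors (P : V -> Prop) (a : T) : V -> Prop :=
  fun v' => exists v, P v /\ B v v' a.

Lemma fold_successors w P v' :
  fold_left successors w P v' <-> exists v, P v /\ walk v w v'.
Proof.
  revert P; induction w as [|a w IH]; intro P; simpl.
  - split; [eauto | intros (v & Hv & ->); auto].
  - rewrite IH; unfold successors; split.
    + intros (u & (v & Hv & Hvu) & Hu); eauto.
    + intros (v & Hv & u & Hvu & Hu); eauto.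
Qed.

Fixpoint sublists (l : list V) : list (list V) :=
  match l with [] => [[]] | a :: l => sublists l ++ map (cons a) (sublists l) end.

Lemma sublists_restrict (P : V -> Prop) l :
  exists s, In s (sublists l) /\ forall v, In v s <-> In v l /\ P v.
Proof.
  induction l as [|a l (s & Hs & Hmem)]; [exists []; simpl; intuition|].
  destruct (classic (P a)).
  - exists (a :: s); split; [simpl; apply in_or_app; right; apply in_map; auto|].
    intro v; simpl; rewrite Hmem; intuition; subst; auto.
  - exists s; split; [simpl; apply in_or_app; left; auto|].
    intro v; simpl; rewrite Hmem; intuition; subst; tauto.
Qed.

Lemma Finite_pred : Finite V -> Finite (V -> Prop).
Proof.
  intros [lV HV]; exists (map (fun s v => In v s) (sublists lV)); intro P.
  destruct (sublists_restrict P lV) as (s & Hs & Hmem).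
  apply in_map_iff; exists s; split; auto.
  apply functional_extensionality; intro v; apply propositional_extensionality.
  rewrite Hmem; intuition.
Qed.

(* Subset construction: the automaton tracks the set of endpoints of walks. *)
Lemma nowalk_regular : Finite V -> regular nowalk.
Proof.
  intro HV; exists (V -> Prop), (fun _ => True), successors, (fun P => forall v, ~ P v).
  split; [apply Finite_pred; auto|].
  intro w; unfold nowalk; split.
  - intros Hw v' (v & _ & Hv)%fold_successors; eapply Hw; eauto.
  - intros Hw v v' Hv; apply (Hw v'), fold_successors; eauto.
Qed.

Variable x : Z -> T.

Lemma walk_factor_of_path (zeta : Z -> V) :
  (forall i, B (zeta i) (zeta (i + 1)) (x i)) ->
  forall n i, walk (zeta i) (factor x i n) (zeta (i + Z.of_nat n)).
Proof.
  intros Hpath n; induction n as [|n IH]; intro i.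
  - simpl; rewrite Z.add_0_r; reflexivity.
  - rewrite factor_S; replace (i + Z.of_nat (S n)) with (i + 1 + Z.of_nat n) by lia.
    exists (zeta (i + 1)); auto.
Qed.

Lemma path_of_walk_factor n i v v' : walk v (factor x i n) v' ->
  exists z : Z -> V, z i = v /\
    forall j, i <= j < i + Z.of_nat n -> B (z j) (z (j + 1)) (x j).
Proof.
  revert i v; induction n as [|n IH]; intros i v Hw.
  - exists (fun _ => v); split; auto; intros; lia.
  - rewrite factor_S in Hw; destruct Hw as (u & Hvu & Hw).
    destruct (IH _ _ Hw) as (z & Hz & Hpath).
    exists (fun j => if j =? i then v else z j); split; [rewrite Z.eqb_refl; auto|].
    intros j Hj; destruct (Z.eqb_spec j i) as [->|].
    + rewrite (proj2 (Z.eqb_neq (i + 1) i)) by lia; subst; auto.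
    + rewrite (proj2 (Z.eqb_neq (j + 1) i)) by lia; apply Hpath; lia.
Qed.

Definition extends_on (i : Z) (v : V) (n : nat) : Prop :=
  exists z : Z -> V, z i = v /\
    forall j, i - Z.of_nat n <= j < i + Z.of_nat n -> B (z j) (z (j + 1)) (x j).

Definition extendable (i : Z) (v : V) : Prop := forall n, extends_on i v n.

Lemma extends_on_antitone i v n m : (n <= m)%nat -> extends_on i v m -> extends_on i v n.
Proof. intros Hnm (z & Hz & Hpath); exists z; split; auto; intros j Hj; apply Hpath; lia. Qed.

Variable lV : list V.
Hypothesis HV : forall v, In v lV.
Hypothesis Hfactors : forall i n, exists v v', walk v (factor x i n) v'.

Lemma extendable_at_0 : exists v, extendable 0 v.
Proof.
  apply (pigeonhole_antitone lV HV); [intros; eapply extends_on_antitone; eauto|].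
  intro N; destruct (Hfactors (- Z.of_nat N) (N + N)) as (v & v' & Hw).
  destruct (path_of_walk_factor _ _ _ _ Hw) as (z & _ & Hpath).
  exists (z 0), z; split; auto; intros j Hj; apply Hpath; lia.
Qed.

Lemma extendable_forward i v : extendable i v ->
  exists v', B v v' (x i) /\ extendable (i + 1) v'.
Proof.
  intro Hv.
  destruct (pigeonhole_antitone lV HV (fun v' n => B v v' (x i) /\ extends_on (i + 1) v' n))
    as [v' Hv'].
  - intros v' n m Hnm [Hb He]; split; auto; eapply extends_on_antitone; eauto.
  - intro N; destruct (Hv (S N)) as (z & Hz & Hpath); exists (z (i + 1)); split.
    + rewrite <- Hz; apply Hpath; lia.
    + exists z; split; auto; intros j Hj; apply Hpath; lia.
  - exists v'; split; [apply (Hv' 0%nat) | intro n; apply Hv'].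
Qed.

Lemma extendable_backward i v : extendable i v ->
  exists u, B u v (x (i - 1)) /\ extendable (i - 1) u.
Proof.
  intro Hv.
  destruct (pigeonhole_antitone lV HV (fun u n => B u v (x (i - 1)) /\ extends_on (i - 1) u n))
    as [u Hu].
  - intros u n m Hnm [Hb He]; split; auto; eapply extends_on_antitone; eauto.
  - intro N; destruct (Hv (S N)) as (z & Hz & Hpath); exists (z (i - 1)); split.
    + rewrite <- Hz; replace i with (i - 1 + 1) at 2 by lia; apply Hpath; lia.
    + exists z; split; auto; intros j Hj; apply Hpath; lia.
  - exists u; split; [apply (Hu 0%nat) | intro n; apply Hu].
Qed.

(* König's lemma: the extendable vertices form an infinite path. *)
Lemma path_of_walk_factors : exists zeta : Z -> V, forall i, B (zeta i) (zeta (i + 1)) (x i).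
Proof.
  destruct extendable_at_0 as [v0 Hv0].
  exact (Z_dependent_choice extendable (fun i v v' => B v v' (x i)) v0 Hv0
           extendable_forward extendable_backward).
Qed.

End Walks.

Lemma XGamma_iff_XF_nowalk {V T : Type} (B : V -> V -> T -> Prop) (x : Z -> T) :
  Finite V ->
  (exists zeta : Z -> V, forall i, B (zeta i) (zeta (i + 1)) (x i)) <-> XF (nowalk B) x.
Proof.
  intros [lV HV]; split.
  - intros [zeta Hpath] w Hw [i Hi]; rewrite <- Hi in Hw.
    eapply Hw, walk_factor_of_path; eauto.
  - intro Hx; apply (path_of_walk_factors B x lV HV); intros i n.
    apply NNPP; intro Hnone; apply (Hx (factor x i n)).
    + intros v v' Hw; apply Hnone; eauto.
    + exists i; rewrite length_factor; reflexivity.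
Qed.

(** * Snakes *)

Section Snakes.
Context {G : Type} (mul : G -> G -> G) (one : G) (inv : G -> G) (S : list G).
Hypothesis HG : group_axioms G mul one inv.

Lemma exists_partial_products (x : Z -> Ltr inv S) :
  exists omega : Z -> G, forall i, omega (i + 1) = mul (omega i) (proj1_sig (x i)).
Proof.
  destruct HG as [Hassoc _ Hone_r Hinv_l _].
  apply (Z_dependent_choice (fun _ _ => True) (fun i g g' => g' = mul g (proj1_sig (x i))) one I).
  - intros i g _; eauto.
  - intros i g _; exists (mul g (inv (proj1_sig (x (i - 1))))); split; auto.
    rewrite <- Hassoc, Hinv_l, Hone_r; reflexivity.
Qed.

Section PartialProducts.
Variables (x : Z -> Ltr inv S) (omega : Z -> G).
Hypothesis Homega : forall i, omega (i + 1) = mul (omega i) (proj1_sig (x i)).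

Lemma partial_products_factor n i :
  omega (i + Z.of_nat n) = mul (omega i) (word_eval mul one inv S (factor x i n)).
Proof.
  destruct HG as [Hassoc _ Hone_r _ _].
  revert i; induction n as [|n IH]; intro i.
  - simpl; rewrite Z.add_0_r, Hone_r; reflexivity.
  - rewrite factor_S; simpl word_eval.
    replace (i + Z.of_nat (Datatypes.S n)) with (i + 1 + Z.of_nat n) by lia.
    rewrite IH, Homega, Hassoc; reflexivity.
Qed.

Lemma partial_products_injective : skeleton mul one inv S x ->
  forall i j, omega i = omega j -> i = j.
Proof.
  destruct HG as [Hassoc Hone_l _ Hinv_l _].
  intros Hskel.
  assert (Hlt : forall i j, i < j -> omega i <> omega j).
  { intros i j Hij Heq.
    pose proof (partial_products_factor (Z.to_nat (j - i)) i) as Hfac.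
    replace (i + Z.of_nat (Z.to_nat (j - i))) with j in Hfac by lia.
    apply (Hskel i (Z.to_nat (j - i))); [lia|].
    transitivity (mul (mul (inv (omega i)) (omega i))
                      (word_eval mul one inv S (factor x i (Z.to_nat (j - i))))).
    - rewrite Hinv_l, Hone_l; reflexivity.
    - rewrite <- Hassoc, <- Hfac, Heq, Hinv_l; reflexivity. }
  intros i j Heq; destruct (Z.lt_total i j) as [Hij|[Hij|Hij]]; auto.
  - exfalso; exact (Hlt i j Hij Heq).
  - exfalso; exact (Hlt j i Hij (eq_sym Heq)).
Qed.

End PartialProducts.

Lemma snake_of_skeleton_path {V : Type} (B : V -> V -> Ltr inv S -> Prop) x zeta :
  skeleton mul one inv S x -> (forall i, B (zeta i) (zeta (i + 1)) (x i)) ->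
  exists omega, snake mul inv S B omega zeta x.
Proof.
  destruct HG as [Hassoc Hone_l _ Hinv_l _].
  intros Hskel Hpath; destruct (exists_partial_products x) as [omega Homega].
  exists omega; split; [exact (partial_products_injective x omega Homega Hskel)|].
  intro i; split; auto.
  rewrite Homega, Hassoc, Hinv_l, Hone_l; reflexivity.
Qed.

End Snakes.

Theorem proposition3
  (G : Type) (mul : G -> G -> G) (one : G) (inv : G -> G)
  (HG : group_axioms G mul one inv)
  (S : list G) (HS : generates mul one inv S)
  (V : Type) (B : V -> V -> Ltr inv S -> Prop)
  (HB : tileset_graph inv S B)
  (Y : (Z -> Ltr inv S) -> Prop)
  (HY : skeletal mul one inv S Y) (HYne : exists y, Y y) :
  let X := fun x => Y x /\ XGamma inv S B x in
  ((exists x, X x) <->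
     exists (omega : Z -> G) (zeta : Z -> V) (d : Z -> Ltr inv S),
       snake mul inv S B omega zeta d /\ Y d) /\
  (effective_subshift Y -> effective_subshift X) /\
  (sofic_subshift Y -> sofic_subshift X).
Proof.
  intro X; destruct HB as [HV _], HY as [Hskel _].
  assert (HX : forall F, (forall x, Y x <-> XF F x) ->
                 forall x, X x <-> XF (fun w => F w \/ nowalk B w) x).
  { intros F HF x; unfold X, XGamma.
    rewrite XF_or, HF, (XGamma_iff_XF_nowalk B x HV); reflexivity. }
  split; [|split].
  - split.
    + intros (x & Hx & zeta & Hpath).
      destruct (snake_of_skeleton_path mul one inv S HG B x zeta (Hskel x Hx) Hpath)
        as [omega Hsnake].
      exists omega, zeta, x; auto.
    + intros (omega & zeta & d & [_ Hsteps] & Hd); exists d; split; auto.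
      exists zeta; intro i; apply Hsteps.
  - intros (F & Hdec & HF); exists (fun w => F w \/ nowalk B w); split.
    + apply decidable_lang_or_regular, nowalk_regular; auto.
    + apply HX; auto.
  - intros (F & Hreg & HF); exists (fun w => F w \/ nowalk B w); split.
    + apply regular_or, nowalk_regular; auto.
    + apply HX; auto.
Qed.
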